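(* Let $S$ be a finite group that is not flat. Then there exists a semi-simple $S$-group $V$ such that $\mathrm{MaxDim}(V \rtimes S) = \mathrm{MaxDim}_S(V) + i(S)$.
   Context: All groups are finite. A subset $s$ of a group is irredundant if $\langle s \setminus \{h\}\rangle \neq \langle s \rangle$ for every $h \in s$; $m(G)$ is the maximal size of an irredundant generating set of $G$ and $i(G)$ the maximal size of an irredundant subset of $G$. $G$ is flat if $m(G) = i(G)$. A semi-simple $S$-group is a finite-dimensional vector space $V$ over a prime field $\mathbb{F}_p$ on which $S$ acts linearly, which is completely reducible (a direct sum of irreducible $\mathbb{F}_p[S]$-modules); $V \rtimes S$ is the corresponding semidirect product. A finite set $\{H_1,\dots,H_n\}$ of subgroups of $G$ is in general position if for every $1 \le j \le n$, $\bigcap_{i \neq j} H_i \supsetneq \bigcap_{i} H_i$. $\mathrm{MaxDim}(G)$ is the largest cardinality of a collection of maximal subgroups of $G$ in general position. If $S$ acts on $V$, $\mathrm{MaxDim}_S(V)$ is the largest cardinality of a collection of maximal $S$-invariant (proper) subgroups of $V$ that is in general position. *)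

From HB Require Import structures.
From mathcomp Require Import all_boot all_order all_algebra all_fingroup all_solvable.
From mathcomp Require Import mxrepresentation mxabelem.

Set Implicit Arguments.
Unset Strict Implicit.
Unset Printing Implicit Defensive.

Local Open Scope group_scope.

Section Defs.
Variable gT : finGroupType.

Definition irredundant (A : {set gT}) : bool :=
  [forall h in A, <<A :\ h>> != <<A>>].

Definition m_irr (G : {group gT}) : nat :=
  \max_(A : {set gT} | (<<A>> == G) && irredundant A) #|A|.

Definition i_irr (G : {group gT}) : nat :=
  \max_(A : {set gT} | (A \subset G) && irredundant A) #|A|.

Definition flat (G : {group gT}) : bool := m_irr G == i_irr G.

(* A family X of subgroups of the ambient group G is in general position if
   for every H in X, the intersection of the other members strictly contains
   the intersection of all members (intersections are taken inside G, so the
   empty intersection is G). *)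
Definition gen_pos (G : {set gT}) (X : {set {group gT}}) : bool :=
  [forall H in X,
     (G :&: \bigcap_(K in X) (K : {set gT}))
       \proper (G :&: \bigcap_(K in X | K != H) (K : {set gT}))].

Definition MaxDim (G : {set gT}) : nat :=
  \max_(X : {set {group gT}} |
          [forall H in X, maximal H G] && gen_pos G X) #|X|.
End Defs.

Definition MaxDim_inv (aT : finGroupType) (D : {set aT}) (rT : finGroupType)
    (A : {set aT}) (to : action D rT) (V : {set rT}) : nat :=
  \max_(X : {set {group rT}} |
          [forall H in X,
             [max H of K | (K \proper V) && [acts A, on K | to]]]
          && gen_pos V X) #|X|.

From HB Require Import structures.
From mathcomp Require Import all_boot all_order all_algebra all_fingroup all_solvable.
From mathcomp Require Import mxrepresentation mxabelem.

(* Let k = i(S), let g_1, ..., g_k be an irredundant subset of S, and let H_j be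
   the subgroup generated by the g_i with i <> j, so that g_j is not in H_j.
   Take for V the sum of k copies of the permutation module F_p[gT] (gT acting by
   right multiplication), with p > |gT| so that V is semisimple by Maschke, and
   let b_j be the indicator of H_j in the j-th copy: b_j is fixed by g_i for
   i <> j, but not by g_j.
   In G = V ><| S, a family of maximal subgroups in general position contains a
   minimal subfamily with the same intersection with V. The traces on V of its
   members are S-submodules in general position, so there are at most as many
   of them as members of any family of maximal submodules with trivial
   intersection; the witnesses of the other members project onto an
   irredundant subset of S. Hence MaxDim(G) <= MaxDim_S(V) + i(S).
   Conversely, pick maximal submodules W_j avoiding [g_j, b_j] and complete
   them to a family X of maximal submodules in general position with trivial
   intersection. The maximal subgroups W S (W in X) and (W_j S)^(b_j^-1) are in
   general position, so MaxDim(G) >= |X| + k = MaxDim_S(V) + i(S). *)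

Set Implicit Arguments.
Unset Strict Implicit.
Unset Printing Implicit Defensive.

Local Open Scope group_scope.
Import GRing.Theory.

Section GeneralPosition.
Variable gT : finGroupType.
Implicit Types (A : {set gT}) (X Y : {set {group gT}}).

Lemma gen_posP A X :
  reflect (forall H : {group gT}, H \in X -> exists2 x, x \in A &
             (forall K : {group gT}, K \in X -> K != H -> x \in K) /\ x \notin H)
          (gen_pos A X).
Proof.
apply: (iffP forallP) => [genX H HX | genX H].
  have /implyP/(_ HX)/properP[_ [x]] := genX H.
  rewrite !inE => /andP[Ax /bigcapP xK] nx.
  exists x => //; split=> [K KX nKH|]; first by apply: xK; rewrite KX.
  apply: contra nx => xH; rewrite Ax; apply/bigcapP => K KX.
  by have [->|nKH] := eqVneq K H; last by apply: xK; rewrite KX.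
apply/implyP => HX; have [x Ax [xK nxH]] := genX H HX.
apply/properP; split.
  rewrite setIS //; apply/bigcapsP => K /andP[KX _]; exact: bigcap_inf.
exists x; first by rewrite inE Ax; apply/bigcapP => K /andP[]; apply: xK.
by rewrite inE Ax; apply: contra nxH => /bigcapP; apply.
Qed.

Lemma gen_posD1 A X (M : {group gT}) : gen_pos A X -> gen_pos A (X :\ M).
Proof.
move/gen_posP => genX; apply/gen_posP => H /setD1P[_ HX].
have [x Ax [xK nxH]] := genX H HX; exists x => //; split => // K /setD1P[_].
exact: xK.
Qed.

Lemma gen_pos_subfamily A X :
  exists2 Y : {set {group gT}}, Y \subset X &
    A :&: \bigcap_(K in Y) K = A :&: \bigcap_(K in X) K /\ gen_pos A Y.
Proof.
pose sameCap (Y : {set {group gT}}) :=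
  (Y \subset X) && (A :&: \bigcap_(K in Y) K == A :&: \bigcap_(K in X) K).
have sameX : sameCap X by rewrite /sameCap subxx eqxx.
case: (arg_minnP (fun Y : {set {group gT}} => #|Y|) sameX) => Y /andP[sYX /eqP capY] minY.
exists Y => //; split => //; apply/forall_inP => H HY.
rewrite properEneq setIS ?andbT; last by apply/bigcapsP => K /andP[KY _]; exact: bigcap_inf.
apply/eqP => capYH; suff : #|Y| <= #|Y :\ H| by rewrite (cardsD1 H Y) HY ltnn.
apply: minY; rewrite /sameCap (subset_trans (subD1set _ _) sYX) -capY capYH.
by apply/eqP/congr2/eq_bigl => // K; rewrite in_setD1 andbC.
Qed.

Lemma gen_pos_setU1 (V P Z : {group gT}) X :
  gen_pos V X -> P \subset \bigcap_(K in X) K -> P :!=: 1 ->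
  P :&: Z = 1 -> P * Z = V -> gen_pos V (Z |: X).
Proof.
move=> /gen_posP genX sPX ntP tiPZ defV.
have sPK K : K \in X -> P \subset K by move=> KX; apply: subset_trans sPX (bigcap_inf _ _).
apply/gen_posP => H /setU1P[-> | HX].
  have [q Pq ntq] := trivgPn _ ntP.
  exists q; first by rewrite -defV -[q]mulg1 mem_mulg.
  split=> [K /setU1P[-> /eqP//| /sPK/subsetP->] //|].
  apply: contra ntq => Zq; have : q \in P :&: Z by rewrite inE Pq.
  by rewrite tiPZ => /set1P ->.
have [x Vx [xK nxH]] := genX H HX.
have /mulsgP[q z Pq Zz defx] : x \in P * Z by rewrite defV.
have Kq K : K \in X -> q \in K by move/sPK/subsetP; apply.
exists z; first by rewrite -defV -[z]mul1g mem_mulg.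
split=> [K /setU1P[-> //|KX nKH] |].
  by rewrite -(mulKg q z) -defx groupM ?groupV ?Kq ?xK.
by apply: contra nxH => Hz; rewrite defx groupM ?Kq.
Qed.

Definition MaxDim_maxnormal (V U : {set gT}) : nat :=
  \max_(X : {set {group gT}} | [forall W in X, maxnormal W V U] && gen_pos V X) #|X|.

Lemma card_le_MaxDim (G : {set gT}) (I : finType) (M : I -> {group gT}) (x : I -> gT) :
  (forall i, maximal (M i) G) -> (forall i, x i \in G) ->
  (forall i j, i != j -> x i \in M j) -> (forall i, x i \notin M i) ->
  #|I| <= MaxDim G.
Proof.
move=> maxM Gx xM nxM.
have injM : injective M.
  move=> i j eqM; apply/eqP/negPn/negP => /xM.
  by rewrite -eqM; apply/negP.
rewrite -(card_imset _ injM); apply: leq_bigmax_cond; apply/andP; split.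
  by apply/forall_inP => _ /imsetP[i _ ->].
apply/gen_posP => _ /imsetP[i _ ->]; exists (x i) => //; split => // _ /imsetP[j _ ->].
by rewrite (inj_eq injM) eq_sym => /xM.
Qed.

Lemma maxnormal_norm (B U : {set gT}) (W : {group gT}) :
  maxnormal W B U -> U \subset 'N(W).
Proof. by case/maxgroupP => /andP[]. Qed.

Lemma maxnormal_eqVeq (B U : {set gT}) (W K : {group gT}) : maxnormal W B U ->
  K \subset B -> U \subset 'N(K) -> W \subset K -> K :=: W \/ K :=: B.
Proof.
case/maxgroupP => _ maxW sKB nKU sWK.
have [pKB | ] := boolP (K \proper B); first by left; rewrite (maxW K) // pKB.
by rewrite properEneq sKB andbT negbK => /eqP; right.
Qed.

End GeneralPosition.

Section InjectiveMorphism.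
Variables (aT rT : finGroupType) (D : {group aT}) (f : {morphism D >-> rT}).
Hypothesis injf : 'injm f.

Lemma injm_setD1 (A : {set aT}) a : A \subset D -> a \in D ->
  f @* (A :\ a) = f @* A :\ f a.
Proof.
move=> sAD Da; apply/setP => y; rewrite in_setD1.
apply/idP/idP => [/morphimP[x Dx /setD1P[nxa Ax] ->] | ]; last first.
  case/andP => nya /morphimP[x Dx Ax eyx].
  by rewrite eyx mem_morphim // in_setD1 Ax andbT; apply: contraNneq nya => exa; rewrite eyx exa.
rewrite mem_morphim // andbT.
by apply: contra nxa => /eqP/(injmP injf x a Dx Da) ->.
Qed.

Lemma irredundant_injm (A : {set aT}) : A \subset D ->
  irredundant (f @* A) = irredundant A.
Proof.
move=> sAD; have sAaD a : A :\ a \subset D by apply: subset_trans (subD1set _ _) sAD.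
have eqf a : a \in D -> (<<f @* A :\ f a>> != <<f @* A>>) = (<<A :\ a>> != <<A>>).
  move=> Da; rewrite -injm_setD1 // -!morphim_gen //.
  by rewrite injm_eq ?gen_subG.
apply/forall_inP/forall_inP => irrA a.
  by move=> Aa; rewrite -eqf ?(subsetP sAD) // irrA ?mem_morphim ?(subsetP sAD).
by case/morphimP => x Dx Ax ->; rewrite eqf ?irrA.
Qed.

Lemma i_irr_injm (S : {group aT}) : S \subset D -> i_irr (f @* S)%G = i_irr S.
Proof.
move=> sSD; apply/eqP; rewrite eqn_leq; apply/andP; split.
  apply/bigmax_leqP => B /andP[sBS irrB].
  have sBfD : B \subset f @* D by apply: subset_trans sBS (morphimS _ sSD).
  have sB'D : f @*^-1 B \subset D := morphpre_sub _ _.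
  rewrite -(morphpreK sBfD) card_injm //; apply: leq_bigmax_cond.
  by rewrite -(injmSK injf _ sB'D) -(irredundant_injm sB'D) morphpreK ?sBS.
apply/bigmax_leqP => A /andP[sAS irrA]; have sAD := subset_trans sAS sSD.
rewrite -(card_injm injf sAD); apply: leq_bigmax_cond.
by rewrite morphimS //= irredundant_injm.
Qed.

Lemma gen_pos_injm (A : {set aT}) (X : {set {group aT}}) :
  A \subset D -> (forall K : {group aT}, K \in X -> K \subset D) ->
  gen_pos (f @* A) [set (f @* K)%G | K in X] = gen_pos A X.
Proof.
move=> sAD sXD.
have injX : {in X &, injective (fun K : {group aT} => (f @* K)%G)}.
  move=> K L KX LX /(congr1 val) /= eqKL; apply: val_inj.
  exact: (injm_morphim_inj injf (sXD K KX) (sXD L LX)).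
have memf (K : {group aT}) x : K \in X -> x \in D -> (f x \in f @* K) = (x \in K).
  by move=> KX Dx; rewrite -!sub1set -morphim_set1 // injmSK ?sub1set ?sXD.
apply/gen_posP/gen_posP => genX H.
  move=> HX; have [y Ay [yK nyH]] := genX _ (imset_f _ HX).
  have [x Dx Ax eyx] := morphimP Ay; rewrite eyx in yK nyH.
  exists x => //; split; last by rewrite -memf.
  move=> K KX nKH; rewrite -memf // yK ?imset_f //.
  by apply: contra nKH => /eqP/injX -> //; rewrite eqxx.
case/imsetP => K KX ->; have [x Ax [xK nxK]] := genX K KX.
have Dx := subsetP sAD x Ax.
exists (f x); first exact: mem_morphim.
split; last by rewrite /= memf.
move=> _ /imsetP[L LX ->] nLK; rewrite /= memf // xK //.
by apply: contraNneq nLK => ->.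
Qed.

End InjectiveMorphism.

Lemma mem_commg_norm (gT : finGroupType) (R : {group gT}) s b :
  s \in 'N(R) -> b \in R -> [~ s, b] \in R.
Proof. by move=> Ns Rb; rewrite commgEr groupMr // memJ_norm ?groupV. Qed.

Section AbelianSemidirect.
Variables (xT : finGroupType) (G V S : {group xT}).
Hypotheses (defG : V ><| S = G) (abV : abelian V).

Let nsVG : V <| G. Proof. by case/sdprod_context: defG. Qed.
Let sSG : S \subset G. Proof. by case/sdprod_context: defG. Qed.
Let mulVS : V * S = G. Proof. by case/sdprod_context: defG. Qed.
Let nVS : S \subset 'N(V). Proof. by case/sdprod_context: defG. Qed.
Let tiVS : V :&: S = 1. Proof. by case/sdprod_context: defG. Qed.
Let sVG : V \subset G. Proof. exact: normal_sub nsVG. Qed.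

Lemma norms_capV (P : pred {group xT}) :
  (forall K, P K -> S \subset 'N(K)) -> S \subset 'N(V :&: \bigcap_(K | P K) K).
Proof.
by move=> nPS; rewrite normsI //; apply/norms_bigcap/bigcapsP.
Qed.

Lemma maxnormal_mulg (W K : {group xT}) : maxnormal W V S ->
  K \subset V -> S \subset 'N(K) -> ~~ (K \subset W) -> W * K = V.
Proof.
move=> maxW sKV nKS nsKW; have sWV := maxnormal_sub maxW.
have nWK : K \subset 'N(W) := subset_trans sKV (sub_abelian_norm abV sWV).
have sWKV : W <*> K \subset V by rewrite join_subG sWV.
rewrite -norm_joinEr //.
have [defWK | //] := maxnormal_eqVeq maxW sWKV (normsY (maxnormal_norm maxW) nKS) (joing_subl W K).
by case/negP: nsKW; rewrite -defWK joing_subr.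
Qed.

Lemma maxnormal_compl (P Z : {group xT}) : minnormal P S ->
  S \subset 'N(Z) -> P :&: Z = 1 -> P * Z = V -> maxnormal Z V S.
Proof.
case/mingroupP => /andP[ntP nPS] minP nZS tiPZ defV.
have sZV : Z \subset V by rewrite -defV mulG_subr.
apply/maxgroupP; split.
  rewrite nZS andbT properEneq sZV andbT; apply: contra ntP => /eqP defZ.
  by rewrite -subG1 -tiPZ subsetI subxx defZ -defV mulG_subl.
move=> K /andP[pKV nKS] sZK; have sKV := proper_sub pKV.
have [tiKP | ntKP] := eqVneq (K :&: P) 1.
  apply/eqP; rewrite eq_sym eqEsubset sZK /=.
  by rewrite -(setIidPl sKV) -defV -group_modr // tiKP mul1g.
have defKP : K :&: P = P by apply: minP; rewrite ?subsetIr // ntKP normsI.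
by case/negP: (proper_subn pKV); rewrite -defV mul_subG // -defKP subsetIl.
Qed.

Lemma join_compl_capV (W : {group xT}) :
  W \subset V -> S \subset 'N(W) -> (W <*> S) :&: V = W.
Proof. by move=> sWV nWS; rewrite norm_joinEr // -group_modl // setIC tiVS mulg1. Qed.

Lemma mem_join_compl (W : {group xT}) s v : W \subset V -> S \subset 'N(W) ->
  s \in S -> v \in V -> (s * v \in W <*> S) = (v \in W).
Proof.
move=> sWV nWS Ss Vv; have WSs := subsetP (joing_subr W S) s Ss.
by rewrite groupMl // -{2}(join_compl_capV sWV nWS) in_setI Vv andbT.
Qed.

Lemma mem_conj_join_compl (W : {group xT}) b s v : W \subset V -> S \subset 'N(W) ->
  b \in V -> s \in S -> v \in V -> (s * v \in (W <*> S) :^ b^-1) = ([~ s, b] * v \in W).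
Proof.
move=> sWV nWS Vb Ss Vv.
have Vsb : [~ s, b] \in V by rewrite mem_commg_norm ?(subsetP nVS).
have fix_v : v ^ b = v by apply/conjg_fixP/commgP/(centsP abV).
by rewrite mem_conjgV conjMg fix_v conjg_mulR -mulgA (mem_join_compl sWV nWS Ss (groupM Vsb Vv)).
Qed.

Lemma maximal_join_compl (W : {group xT}) : maxnormal W V S -> maximal (W <*> S) G.
Proof.
move=> maxW; have sWV := maxnormal_sub maxW; have nWS := maxnormal_norm maxW.
apply/maxgroupP; split.
  rewrite properEneq join_subG (subset_trans sWV sVG) sSG !andbT.
  apply: contraTneq (maxnormal_proper maxW) => defWS.
  by rewrite -(join_compl_capV sWV nWS) defWS (setIidPr sVG) properxx.
move=> K /andP[sKG nGK] sWSK; have sSK := subset_trans (joing_subr W S) sWSK.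
have sWKV : W \subset K :&: V by rewrite subsetI sWV (subset_trans (joing_subl W S)).
have nKVS : S \subset 'N(K :&: V) by rewrite normsI // (subset_trans sSK (normG K)).
have defK : (K :&: V) * S = K by rewrite group_modr // mulVS (setIidPl sKG).
have [defKV | defKV] := maxnormal_eqVeq maxW (subsetIr K V) nKVS sWKV.
  by apply/eqP; rewrite eqEsubset sWSK andbT -defK defKV mul_subG ?joing_subl ?joing_subr.
by case/negP: nGK; rewrite -defK defKV mulVS.
Qed.

Lemma maxnormal_cap_sep (W B C : {group xT}) : maxnormal W V S ->
  B \subset C -> C \subset V -> S \subset 'N(B) -> B :&: W = C :&: W -> B :!=: C ->
  B \subset W /\ ~~ (C \subset W).
Proof.
move=> maxW sBC sCV nBS eqBCW neBC; split.
  apply: contraR (neBC) => nsBW; rewrite eqEsubset sBC /=.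
  have defV := maxnormal_mulg maxW (subset_trans sBC sCV) nBS nsBW.
  have nWB := subset_trans (subset_trans sBC sCV) (sub_abelian_norm abV (maxnormal_sub maxW)).
  rewrite -(setIidPl sCV) -defV -(normC nWB).
  by rewrite setIC -group_modl // setIC -eqBCW mul_subG ?subsetIl.
apply: contra neBC => sCW; rewrite eqEsubset sBC /=.
by rewrite -(setIidPl sCW) -eqBCW subsetIl.
Qed.

Section FiltrationLength.
Variable X : {set {group xT}}.
Hypotheses (maxX : forall W, W \in X -> maxnormal W V S) (capX : V :&: \bigcap_(W in X) W = 1).
Local Notation W_ i := (nth 1%G (enum X) i).

Definition cap_prefix t : {group xT} := (V :&: \bigcap_(i < t) W_ i)%G.

(* The number of layers cap_prefix t / cap_prefix t.+1 on which C is nontrivial: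
   it is strictly monotone on S-invariant subgroups, hence bounds chain lengths. *)
Definition flength (C : {set xT}) : nat :=
  #|[set t : 'I_#|X| | ~~ (C :&: cap_prefix t \subset W_ t)]|.

Lemma cap_prefixS t : cap_prefix t.+1 :=: cap_prefix t :&: W_ t.
Proof. by rewrite /= big_ord_recr setIA. Qed.

Lemma cap_prefix_full : cap_prefix #|X| :=: 1.
Proof.
rewrite /= -capX; congr (_ :&: _); apply/esym.
by rewrite -big_enum (big_nth 1%G) big_mkord cardE.
Qed.

Lemma norms_nth_enum i : S \subset 'N(W_ i).
Proof.
have [ltiX | leXi] := ltnP i (size (enum X)).
  have : W_ i \in X by rewrite -mem_enum mem_nth.
  by move/maxX/maxnormal_norm.
by rewrite nth_default // norm1 subsetT.
Qed.

Lemma norm_cap_prefix t : S \subset 'N(cap_prefix t).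
Proof. by rewrite normsI //; apply/norms_bigcap/bigcapsP => i _; apply: norms_nth_enum. Qed.

Lemma flength_lt (B C : {group xT}) : B \proper C -> C \subset V ->
  S \subset 'N(B) -> flength B < flength C.
Proof.
move=> pBC sCV nBS; have sBC := proper_sub pBC.
pose differ (t : 'I_#|X|.+1) := C :&: cap_prefix t != B :&: cap_prefix t.
have differ0 : differ ord0.
  rewrite /differ /= big_ord0 setIT (setIidPl sCV) (setIidPl (subset_trans sBC sCV)).
  by rewrite eq_sym proper_neq.
case: (arg_maxnP (fun t : 'I_#|X|.+1 => val t) differ0) => j differj maxj.
have ltjX : j < #|X|.
  rewrite ltn_neqAle -ltnS ltn_ord andbT; apply: contraTneq differj => eqjX.
  by rewrite /differ eqjX negbK cap_prefix_full !(setIidPr (sub1G _)).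
have sameS : B :&: cap_prefix j.+1 = C :&: cap_prefix j.+1.
  apply/eqP; rewrite eq_sym; apply/negPn/negP => differS.
  by have := maxj (Ordinal (ltjX : j.+1 < #|X|.+1)) differS; rewrite /= ltnn.
have maxWj : maxnormal (W_ j) V S by apply: maxX; rewrite -mem_enum mem_nth -?cardE.
have sBCj : B :&: cap_prefix j \subset C :&: cap_prefix j := setSI _ sBC.
have sCjV : C :&: cap_prefix j \subset V := subset_trans (subsetIl _ _) sCV.
have eqBCj : B :&: cap_prefix j :&: W_ j = C :&: cap_prefix j :&: W_ j.
  by rewrite -(setIA B) -(setIA C) -!cap_prefixS.
have neBCj : B :&: cap_prefix j != C :&: cap_prefix j by rewrite eq_sym.
have [sBjW nsCjW] := maxnormal_cap_sep (B := (B :&: cap_prefix j)%G)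
  (C := (C :&: cap_prefix j)%G) maxWj sBCj sCjV (normsI nBS (norm_cap_prefix j)) eqBCj neBCj.
apply: proper_card; apply/properP; split.
  apply/subsetP => t; rewrite !inE; apply: contra; exact: subset_trans (setSI _ sBC).
by exists (Ordinal ltjX); rewrite !inE ?nsCjW ?negbK.
Qed.

Lemma flength_gen_pos (Y : {set {group xT}}) :
  (forall K, K \in Y -> K \subset V /\ S \subset 'N(K)) -> gen_pos V Y ->
  flength (V :&: \bigcap_(K in Y) K) + #|Y| <= flength V.
Proof.
have [m] := ubnP #|Y|; elim: m Y => // m IHm Y /ltnSE-leYm subY genY.
have [-> | [M MY]] := set_0Vmem Y; first by rewrite big_set0 setIT cards0 addn0.
have subYM : forall K, K \in Y :\ M -> K \subset V /\ S \subset 'N(K).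
  by move=> K /setD1P[_ /subY].
have ltYM : #|Y :\ M| < m by rewrite (leq_trans _ leYm) // (cardsD1 M Y) MY.
apply: leq_trans (IHm _ ltYM subYM (gen_posD1 M genY)).
rewrite (cardsD1 M Y) MY add1n addnS ltn_add2r.
have capYM : \bigcap_(K in Y :\ M) K = \bigcap_(K in Y | K != M) K.
  by apply: eq_bigl => K; rewrite in_setD1 andbC.
apply: flength_lt; last 2 first.
- by rewrite subsetIl.
- by apply: norms_capV => K /subY[].
by rewrite /= capYM; move/forall_inP: genY; apply.
Qed.

Lemma card_gen_pos_le (Y : {set {group xT}}) :
  (forall K, K \in Y -> K \subset V /\ S \subset 'N(K)) -> gen_pos V Y -> #|Y| <= #|X|.
Proof.
move=> subY genY; apply: leq_trans (leq_addl _ _) (leq_trans (flength_gen_pos subY genY) _).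
by rewrite (leq_trans (max_card _)) ?card_ord.
Qed.

End FiltrationLength.

Lemma maximal_capV_norm (M : {group xT}) :
  maximal M G -> ~~ (V \subset M) -> S \subset 'N(V :&: M).
Proof.
case/maxgroupP => /andP[sMG _] maxM nsVM.
have defMV : M <*> V = G.
  have [pMVG | ] := boolP ((M <*> V)%G \proper G).
    by case/negP: nsVM; rewrite -(maxM _ pMVG (joing_subl M V)) joing_subr.
  by rewrite properEneq join_subG sMG sVG !andbT negbK => /eqP.
have nVM_M : M \subset 'N(V :&: M) by rewrite normsI ?normG // (subset_trans sMG) ?normal_norm.
have nVM_V : V \subset 'N(V :&: M) := sub_abelian_norm abV (subsetIl V M).
by rewrite (subset_trans sSG) // -defMV join_subG nVM_M.
Qed.

Lemma remgr_ker x : x \in G -> remgr V S x = 1 -> x \in V.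
Proof. by move=> Gx remx1; rewrite (divgr_eq V S x) remx1 mulg1 mem_divgr ?mulVS. Qed.

Lemma remgr_notin_gen (M D : {group xT}) (B : {set xT}) x :
  D \subset G -> V :&: D \subset M -> B \subset D :&: M -> x \in D -> x \notin M ->
  remgr V S x \notin <<[set remgr V S y | y in B]>>.
Proof.
move=> sDG sVDM sBDM Dx nxM.
have cplS : S \in [complements to V in G] by apply/complP.
pose pi : {morphism G >-> xT} := Morphism (remgrM cplS nsVG).
have sBG : B \subset G by rewrite (subset_trans sBDM) // subIset ?sDG.
have Gx := subsetP sDG x Dx.
rewrite -[[set _ | y in B]](morphimEsub pi sBG) -morphim_gen //.
apply/negP => /morphimP[y Gy By /= eqxy].
have /setIP[Dy My] : y \in D :&: M by apply: subsetP By; rewrite gen_subG.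
have Vyx : y^-1 * x \in V.
  apply: remgr_ker; first by rewrite groupM ?groupV.
  by have := morphM pi (groupVr Gy) Gx; rewrite morphV //= eqxy mulVg.
case/negP: nxM; rewrite -(mulKVg y x) groupM // (subsetP sVDM) //.
by rewrite inE Vyx groupM ?groupV.
Qed.

Lemma card_le_i_irr (Z : {set {group xT}}) (D : {group xT}) (w : {group xT} -> xT) :
  D \subset G -> (forall M, M \in Z -> V :&: D \subset M) ->
  (forall M, M \in Z -> w M \in D) ->
  (forall M N, M \in Z -> N \in Z -> N != M -> w N \in M) ->
  (forall M, M \in Z -> w M \notin M) -> #|Z| <= i_irr S.
Proof.
move=> sDG sVDZ DwZ wZ nwZ; pose pw M := remgr V S (w M).
have pw_notin M : M \in Z -> pw M \notin <<[set pw N | N in Z :\ M]>>.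
  move=> MZ; have sWDM : w @: (Z :\ M) \subset D :&: M.
    by apply/subsetP => _ /imsetP[N /setD1P[nNM NZ] ->]; rewrite inE DwZ ?wZ.
  have -> : [set pw N | N in Z :\ M] = [set remgr V S y | y in w @: (Z :\ M)].
    by rewrite -imset_comp.
  exact: remgr_notin_gen sDG (sVDZ M MZ) sWDM (DwZ M MZ) (nwZ M MZ).
have inj_pw : {in Z &, injective pw}.
  move=> M N MZ NZ eqMN; apply/eqP/negPn/negP => neMN; case/negP: (pw_notin M MZ).
  by rewrite eqMN mem_gen // imset_f // in_setD1 eq_sym neMN.
rewrite -(card_in_imset inj_pw); apply: leq_bigmax_cond; apply/andP; split.
  apply/subsetP => a /imsetP[M MZ ->]; apply: mem_remgr.
  by rewrite mulVS (subsetP sDG) ?DwZ.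
apply/forall_inP => a /imsetP[M MZ ->]; apply: contra (pw_notin M MZ) => /eqP eqA.
have sAM : [set pw N | N in Z] :\ pw M \subset [set pw N | N in Z :\ M].
  apply/subsetP => y /setD1P[neM /imsetP[N NZ eqN]].
  by rewrite eqN imset_f // in_setD1 NZ andbT; apply: contraNneq neM => eqNM; rewrite eqN eqNM.
by apply: subsetP (genS sAM) _ _; rewrite eqA mem_gen ?imset_f.
Qed.

Lemma card_maximal_gen_pos_le (X Y : {set {group xT}}) :
  (forall W, W \in X -> maxnormal W V S) -> V :&: \bigcap_(W in X) W = 1 ->
  (forall M, M \in Y -> maximal M G) -> gen_pos V Y -> #|Y| <= #|X|.
Proof.
move=> maxX capX maxY genY; have /gen_posP witY := genY.
have nsVM M : M \in Y -> ~~ (V \subset M).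
  by move=> MY; have [x Vx [_ nxM]] := witY M MY; apply: contra nxM => /subsetP->.
have injVM : {in Y &, injective (fun M : {group xT} => (V :&: M)%G)}.
  move=> M N MY NY /(congr1 val) /= eqVMN; apply/eqP/negPn/negP => neMN.
  have [x Vx [xN nxM]] := witY M MY.
  have /setIP[_ Mx] : x \in V :&: M by rewrite eqVMN inE Vx xN // eq_sym.
  by rewrite Mx in nxM.
rewrite -(card_in_imset injVM); apply: (card_gen_pos_le maxX capX).
  move=> _ /imsetP[M MY ->]; split; first exact: subsetIl.
  by apply: maximal_capV_norm; rewrite ?maxY ?nsVM.
apply/gen_posP => _ /imsetP[M MY ->]; have [x Vx [xN nxM]] := witY M MY.
exists x => //; split; last by rewrite inE negb_and nxM orbT.
move=> _ /imsetP[N NY ->] neNM; rewrite inE Vx xN //.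
by apply: contraNneq neNM => ->.
Qed.

Lemma MaxDim_upper (X : {set {group xT}}) :
  (forall W, W \in X -> maxnormal W V S) -> V :&: \bigcap_(W in X) W = 1 ->
  MaxDim G <= #|X| + i_irr S.
Proof.
move=> maxX capX; apply/bigmax_leqP => Y /andP[/forall_inP maxY genY].
have [Y0 sY0Y [capY0 genY0]] := gen_pos_subfamily V Y.
have /fin_all_exists[w wP] : forall M : {group xT}, exists x, M \in Y ->
    [/\ x \in G, forall N, N \in Y -> N != M -> x \in N & x \notin M].
  move=> M; have [MY | _] := boolP (M \in Y); last by exists 1.
  by have [x Gx [xN nxM]] := gen_posP _ _ genY M MY; exists x.
rewrite -(cardsID Y0 Y) (setIidPr sY0Y) leq_add //.
  by apply: card_maximal_gen_pos_le maxX capX _ genY0 => M /(subsetP sY0Y)/maxY.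
pose D := (G :&: \bigcap_(K in Y0) K)%G.
apply: (card_le_i_irr (D := D) (w := w)) => [|M|M|M N|M] /=.
- exact: subsetIl.
- case/setDP => MY _; rewrite setIA (setIidPl sVG) capY0.
  exact: subset_trans (subsetIr _ _) (bigcap_inf _ MY).
- case/setDP => MY nMY0; have [Gw wN _] := wP M MY.
  rewrite inE Gw; apply/bigcapP => K KY0; apply: wN; first exact: subsetP sY0Y K KY0.
  by apply: contraNneq nMY0 => <-.
- by case/setDP => MY _ /setDP[NY _] neNM; case: (wP N NY) => _ wN _; rewrite wN // eq_sym.
- by case/setDP => /wP[].
Qed.

Section LowerBound.
Variables (k : nat) (s b : 'I_k -> xT) (X : {set {group xT}}) (W : 'I_k -> {group xT}).
Hypotheses (Ss : forall j, s j \in S) (Vb : forall j, b j \in V).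
Hypothesis comm_sb : forall i j, i != j -> [~ s i, b j] = 1.
Hypotheses (maxX : forall K, K \in X -> maxnormal K V S) (genX : gen_pos V X).
Hypotheses (XW : forall j, W j \in X) (injW : injective W).
Hypothesis comm_sbW : forall j, [~ s j, b j] \notin W j.

Lemma gen_pos_shift (K : {group xT}) c : K \in X -> c \in V -> c \notin K ->
  exists v, [/\ v \in V, forall L, L \in X -> L != K -> v \in L, v \notin K & c * v \in K].
Proof.
move=> KX Vc ncK; pose E := (V :&: \bigcap_(L | (L \in X) && (L != K)) L)%G.
have nES : S \subset 'N(E) by apply: norms_capV => L /andP[/maxX/maxnormal_norm].
have [x Vx [xL nxK]] := gen_posP _ _ genX K KX.
have nsEK : ~~ (E \subset K).
  apply: contra nxK => /subsetP; apply; rewrite inE Vx.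
  by apply/bigcapP => L /andP[]; apply: xL.
have nKE : E \subset 'N(K).
  exact: subset_trans (subsetIl _ _) (sub_abelian_norm abV (maxnormal_sub (maxX KX))).
have /mulsgP[e y Ee Ky defc] : c^-1 \in E * K.
  by rewrite normC // (maxnormal_mulg (maxX KX) (subsetIl _ _) nES nsEK) groupV.
have /setIP[Ve /bigcapP eL] := Ee; exists e; split => //.
- by move=> L LX neLK; apply: eL; rewrite LX.
- by apply: contra ncK => Ke; rewrite -[c]invgK defc groupV groupM.
by rewrite -[c]invgK defc invMg mulgKV groupV.
Qed.

Lemma join_compl_witness (K : {group xT}) : K \in X -> exists t, exists v,
  [/\ t \in S, v \in V, forall L, L \in X -> L != K -> v \in L, v \notin K
    & forall j, [~ t, b j] * v \in W j].
Proof.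
move=> KX; case: (pickP (fun j => W j == K)) => [j /eqP defK | notW].
  have Vc : [~ s j, b j] \in V by rewrite mem_commg_norm ?(subsetP nVS).
  have ncK : [~ s j, b j] \notin K by rewrite -defK.
  have [v [Vv vL nvK cv]] := gen_pos_shift KX Vc ncK.
  exists (s j), v; split => // i; have [-> | neij] := eqVneq i j; first by rewrite defK.
  by rewrite comm_sb 1?eq_sym // mul1g vL ?XW // -defK (inj_eq injW).
have [v Vv [vL nvK]] := gen_posP _ _ genX K KX.
by exists 1, v; split=> // i; rewrite comm1g mul1g vL ?XW ?notW.
Qed.

Lemma MaxDim_lower : #|X| + k <= MaxDim G.
Proof.
have /fin_all_exists[w wP] : forall K : {K : {group xT} | K \in X}, exists tv : xT * xT,
    [/\ tv.1 \in S, tv.2 \in V, forall L, L \in X -> L != val K -> tv.2 \in L,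
       tv.2 \notin val K & forall j, [~ tv.1, b j] * tv.2 \in W j].
  by case=> K KX; have [t [v ?]] := join_compl_witness KX; exists (t, v).
pose M (i : {K : {group xT} | K \in X} + 'I_k) := match i with
  | inl K => (val K <*> S)%G | inr j => ((W j <*> S) :^ (b j)^-1)%G end.
pose x (i : {K : {group xT} | K \in X} + 'I_k) := match i with
  | inl K => (w K).1 * (w K).2 | inr j => s j * 1 end.
have memM K t v : K \in X -> t \in S -> v \in V -> (t * v \in K <*> S) = (v \in K).
  by move=> /maxX maxK; apply: mem_join_compl (maxnormal_sub maxK) (maxnormal_norm maxK).
have memMW j t v : t \in S -> v \in V ->
    (t * v \in (W j <*> S) :^ (b j)^-1) = ([~ t, b j] * v \in W j).
  have maxWj := maxX (XW j).
  exact: mem_conj_join_compl (maxnormal_sub maxWj) (maxnormal_norm maxWj) (Vb j).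
have -> : #|X| + k = #|{: {K : {group xT} | K \in X} + 'I_k}|.
  by rewrite card_sum card_sig card_ord.
apply: (@card_le_MaxDim _ G _ M x) => [[K|j] | [K|j] | [K|j] [L|i] /= neij | [K|j]] /=.
- exact: maximal_join_compl (maxX (valP K)).
- rewrite -(conjGid (groupVr (subsetP sVG _ (Vb j)))) maximalJ.
  exact: maximal_join_compl (maxX (XW j)).
- by case: (wP K) => St Vv _ _ _; rewrite groupM ?(subsetP sSG _ St) ?(subsetP sVG _ Vv).
- by rewrite mulg1 (subsetP sSG _ (Ss j)).
- case: (wP K) => St Vv vL _ _; rewrite memM ?(valP L) //; apply: vL (valP L) _.
  by apply: contraNneq neij => /val_inj ->.
- by case: (wP K) => St Vv _ _ vW; rewrite memMW.
- by rewrite memM ?(valP L) ?group1.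
- by rewrite memMW ?group1 // comm_sb ?mulg1 ?group1.
- by case: (wP K) => St Vv _ nvK _; rewrite memM ?(valP K).
by rewrite memMW ?group1 // mulg1.
Qed.

End LowerBound.

Section CoprimeAction.
Hypothesis splitV : forall K : {group xT}, K \subset V -> [splits V, over K].
Hypothesis coVS : coprime #|V| #|S|.

Lemma Maschke_compl (K : {group xT}) : K \subset V -> S \subset 'N(K) ->
  exists L : {group xT}, [/\ L \subset V, S \subset 'N(L), K :&: L = 1 & K * L = V].
Proof.
move=> sKV nKS; have nKG : G \subset 'N(K).
  by rewrite -mulVS; apply: mul_subG => //; apply: sub_abelian_norm.
have nsKG : K <| G by rewrite /normal (subset_trans sKV sVG).
have coKGV : coprime #|K| #|G : V|.
  by rewrite -(index_sdprod defG) (coprime_dvdl (cardSg sKV)).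
have /splitsP[C /complP[tiKC defKC]] : [splits G, over K].
  by rewrite (Gaschutz_split nsKG sKV sVG (abelianS sKV abV) coKGV) splitV.
have sCG : C \subset G by rewrite -defKC mulG_subr.
exists (C :&: V)%G; split.
- exact: subsetIr.
- apply: subset_trans sSG _; rewrite -defKC; apply: mul_subG.
    exact: subset_trans sKV (sub_abelian_norm abV (subsetIr C V)).
  by rewrite normsI ?normG // (subset_trans sCG) ?normal_norm.
- by rewrite setIA tiKC setI1g.
by rewrite group_modl // defKC (setIidPr sVG).
Qed.

Lemma maxnormal_compl_exists (P N : {group xT}) : minnormal P S -> P \subset V ->
    N \subset V -> S \subset 'N(N) -> P :&: N = 1 ->
  exists W : {group xT}, [/\ maxnormal W V S, N \subset W, P :&: W = 1 & P * W = V].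
Proof.
move=> minP sPV sNV nNS tiPN; have [_ nPS] : P :!=: 1 /\ S \subset 'N(P).
  by case/mingroupP: minP => /andP[].
have sPNV : P <*> N \subset V by rewrite join_subG sPV.
have [U [sUV nUS tiPNU defV]] := Maschke_compl sPNV (normsY nPS nNS).
have defPN : P <*> N = P * N.
  exact: norm_joinEr (subset_trans sNV (sub_abelian_norm abV sPV)).
have defNU : N <*> U = N * U.
  exact: norm_joinEr (subset_trans sUV (sub_abelian_norm abV sNV)).
have defPW : P * (N <*> U) = V by rewrite defNU mulgA -defPN.
have tiPW : P :&: (N <*> U) = 1.
  apply/trivgP/subsetP => x /setIP[Px]; rewrite /= defNU => /mulsgP[y u Ny Uu defx].
  have PNu : u \in P <*> N.
    rewrite -(mulKg y u) -defx groupM ?groupV //.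
      exact: subsetP (joing_subr P N) y Ny.
    exact: subsetP (joing_subl P N) x Px.
  have : u \in (P <*> N) :&: U by rewrite inE PNu.
  rewrite tiPNU => /set1P u1.
  by rewrite -tiPN inE Px defx u1 mulg1.
exists (N <*> U)%G; split=> //; last exact: joing_subl.
exact: maxnormal_compl minP (normsY nNS nUS) tiPW defPW.
Qed.

Lemma maxnormal_avoid (R N : {group xT}) c : R \subset V -> S \subset 'N(R) ->
    N \subset V -> S \subset 'N(N) -> R :&: N = 1 -> c \in R -> c != 1 ->
  exists2 W : {group xT}, maxnormal W V S & N \subset W /\ c \notin W.
Proof.
move=> sRV nRS sNV nNS tiRN Rc ntc; pose C := <<class_support [set c] S>>%G.
have nCS : S \subset 'N(C) := norms_gen (class_support_norm _ _).
have sCK (K : {group xT}) : c \in K -> S \subset 'N(K) -> C \subset K.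
  by move=> Kc nKS; rewrite gen_subG class_support_sub_norm ?sub1set.
have ntC : C :!=: 1.
  apply/trivgPn; exists c => //; rewrite mem_gen //.
  exact: subsetP (sub_class_support _ _) c (set11 c).
have [P minP sPC] := minnormal_exists ntC nCS.
have sPR : P \subset R := subset_trans sPC (sCK R Rc nRS).
have tiPN : P :&: N = 1 by apply/trivgP; rewrite -tiRN setSI.
have [W [maxW sNW tiPW _]] := maxnormal_compl_exists minP (subset_trans sPR sRV) sNV nNS tiPN.
exists W => //; split => //; apply/negP => Wc.
case/mingroupP: minP => /andP[ntP _] _; case/negP: ntP.
by rewrite -subG1 -tiPW subsetI subxx (subset_trans sPC (sCK W Wc (maxnormal_norm maxW))).
Qed.

Lemma gen_pos_maxnormal_extend (X : {set {group xT}}) :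
  (forall W, W \in X -> maxnormal W V S) -> gen_pos V X ->
  exists2 X' : {set {group xT}}, X \subset X' &
    [/\ forall W, W \in X' -> maxnormal W V S, gen_pos V X' & V :&: \bigcap_(W in X') W = 1].
Proof.
have [m] := ubnP #|V :&: \bigcap_(W in X) W|; elim: m X => // m IHm X /ltnSE-leXm maxX genX.
pose D := (V :&: \bigcap_(W in X) W)%G.
have [trivD | ntD] := eqVneq (D : {set xT}) 1; first by exists X.
have nDS : S \subset 'N(D) by apply: norms_capV => W /maxX/maxnormal_norm.
have [P minP sPD] := minnormal_exists ntD nDS.
have sPV : P \subset V := subset_trans sPD (subsetIl _ _).
have [Z [maxZ _ tiPZ defV]] := maxnormal_compl_exists minP sPV (sub1G V) (norms1 S) (setIg1 P).
have ntP : P :!=: 1 by case/mingroupP: minP => /andP[].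
have [q Pq ntq] := trivgPn _ ntP.
have nZq : q \notin Z.
  apply: contra ntq => Zq; have : q \in P :&: Z by rewrite inE Pq.
  by rewrite tiPZ => /set1P ->.
have maxZX : forall W, W \in Z |: X -> maxnormal W V S.
  by move=> W /setU1P[-> | /maxX].
have ltZXm : #|V :&: \bigcap_(W in Z |: X) W| < m.
  apply: leq_trans leXm; apply: proper_card; apply/properP; split.
    by rewrite setIS //; apply/bigcapsP => W WX; rewrite bigcap_inf ?setU1r.
  exists q; first exact: subsetP sPD q Pq.
  by rewrite inE negb_and; apply/orP; right; apply: contra nZq => /bigcapP; apply; rewrite setU11.
have genZX := gen_pos_setU1 genX (subset_trans sPD (subsetIr _ _)) ntP tiPZ defV.
have [X' sZXX' extX'] := IHm (Z |: X) ltZXm maxZX genZX.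
by exists X' => //; apply: subset_trans (subsetUr _ _) sZXX'.
Qed.

Section NiceFamily.
Variables (k : nat) (s b : 'I_k -> xT) (R R' : 'I_k -> {group xT}).
Hypotheses (Ss : forall j, s j \in S) (Rb : forall j, b j \in R j).
Hypotheses (sRV : forall j, R j \subset V) (nRS : forall j, S \subset 'N(R j)).
Hypotheses (sR'V : forall j, R' j \subset V) (nR'S : forall j, S \subset 'N(R' j)).
Hypotheses (tiRR' : forall j, R j :&: R' j = 1) (sRR' : forall i j, i != j -> R i \subset R' j).
Hypothesis comm_sb : forall i j, i != j -> [~ s i, b j] = 1.
Hypothesis ntcomm_sb : forall j, [~ s j, b j] != 1.

Lemma gen_pos_maxnormal_avoiding : exists X : {set {group xT}}, exists W : 'I_k -> {group xT},
  [/\ forall K, K \in X -> maxnormal K V S, gen_pos V X & V :&: \bigcap_(K in X) K = 1]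
  /\ [/\ forall j, W j \in X, injective W & forall j, [~ s j, b j] \notin W j].
Proof.
have Rc j : [~ s j, b j] \in R j by rewrite mem_commg_norm ?(subsetP (nRS j)).
have /fin_all_exists[W WP] : forall j, exists W : {group xT},
    maxnormal W V S /\ R' j \subset W /\ [~ s j, b j] \notin W.
  move=> j; have [W ? ?] := maxnormal_avoid (sRV j) (nRS j) (sR'V j) (nR'S j) (tiRR' j)
    (Rc j) (ntcomm_sb j).
  by exists W.
have cW i j : i != j -> [~ s i, b i] \in W j.
  by move=> neij; have [_ [sR'W _]] := WP j; apply: subsetP sR'W _ (subsetP (sRR' neij) _ (Rc i)).
have injW : injective W.
  move=> i j eqW; apply/eqP/negPn/negP => /cW; rewrite -eqW.
  by case: (WP i) => _ [_ /negP].
have [X sWX [maxX genX capX]] : exists2 X : {set {group xT}}, [set W j | j : 'I_k] \subset X &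
    [/\ forall K, K \in X -> maxnormal K V S, gen_pos V X & V :&: \bigcap_(K in X) K = 1].
  apply: gen_pos_maxnormal_extend => [_ /imsetP[j _ ->] | ]; first by case: (WP j).
  apply/gen_posP => _ /imsetP[j _ ->]; exists [~ s j, b j]; first exact: subsetP (sRV j) _ (Rc j).
  split; last by case: (WP j) => _ [].
  by move=> _ /imsetP[i _ ->] neij; apply: cW; apply: contraNneq neij => ->.
exists X, W; split; split => // j; first by rewrite (subsetP sWX) ?imset_f.
by case: (WP j) => _ [].
Qed.

Theorem MaxDim_sdprod : k = i_irr S ->
  MaxDim G = MaxDim_maxnormal V S + i_irr S.
Proof.
move=> ki; have [X [W [[maxX genX capX] [XW injW comm_sbW]]]] := gen_pos_maxnormal_avoiding.
have -> : MaxDim_maxnormal V S = #|X|.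
  apply/eqP; rewrite eqn_leq; apply/andP; split.
    apply/bigmax_leqP => Y /andP[/forall_inP maxY genY].
    apply: (card_gen_pos_le maxX capX) genY => K /maxY maxK.
    exact: conj (maxnormal_sub maxK) (maxnormal_norm maxK).
  by apply: leq_bigmax_cond; rewrite genX andbT; apply/forall_inP.
apply/eqP; rewrite eqn_leq MaxDim_upper // -ki.
exact: MaxDim_lower Ss (fun j => subsetP (sRV j) _ (Rb j)) comm_sb maxX genX XW injW comm_sbW.
Qed.

End NiceFamily.
End CoprimeAction.
End AbelianSemidirect.

Section ReprSemidirect.
Variables (gT : finGroupType) (S : {group gT}) (p n : nat).
Variable rG : mx_representation 'F_p S n.
Hypotheses (p_pr : prime p) (p'S : p^'.-group S).
Local Notation to := ('MR rG)%gact.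
Local Notation f1 := (sdpair1 to).
Local Notation f2 := (sdpair2 to).
Local Notation rVn := 'rV['F_p]_n.
Local Notation VV := (f1 @* [set: rVn])%G.
Local Notation SS := (f2 @* S)%G.

Let injf1 : 'injm f1 := injm_sdpair1 to.

Lemma acts_sdpair1 (K : {set rVn}) : [acts S, on K | to] = (SS \subset 'N(f1 @* K)).
Proof. by rewrite actsEsd ?subsetT. Qed.

Lemma maxnormal_sdpair1 (H : {group rVn}) :
  maxnormal (f1 @* H) VV SS = [max H of K | (K \proper [set: rVn]) && [acts S, on K | to]].
Proof.
have propf (A B : {set rVn}) : (f1 @* A \proper f1 @* B) = (A \proper B).
  by rewrite injm_proper ?subsetT.
have subf (A B : {set rVn}) : (f1 @* A \subset f1 @* B) = (A \subset B).
  by rewrite injmSK ?subsetT.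
apply/maxgroupP/maxgroupP => -[]; rewrite propf acts_sdpair1 => propH maxH; split=> // K.
  case/andP => pKT aK sHK; have := maxH (f1 @* K)%G.
  rewrite propf -acts_sdpair1 pKT aK subf => /(_ isT sHK) eqfKH.
  by apply/eqP; rewrite eqEsubset -!subf eqfKH subxx.
case/andP => pKV nKS sHK; have defK := morphpreK (proper_sub pKV).
have := maxH (f1 @*^-1 K)%G; rewrite -propf acts_sdpair1 -subf defK pKV nKS sHK.
by move=> /(_ isT isT) eqKH; apply: val_inj; rewrite /= -defK eqKH.
Qed.


Lemma MaxDim_inv_sdpair1 : MaxDim_inv S to [set: rVn] = MaxDim_maxnormal VV SS.
Proof.
pose fX (X : {set {group rVn}}) := [set (f1 @* K)%G | K in X].
have card_fX X : #|fX X| = #|X|.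
  apply: card_in_imset => K L _ _ /(congr1 (@gval _)) /eqP eqKL; apply: val_inj.
  by apply/eqP; rewrite -(injm_eq injf1) ?subsetT.
have predfX (X : {set {group rVn}}) :
    [forall H in X, [max H of K | (K \proper [set: rVn]) && [acts S, on K | to]]]
    && gen_pos [set: rVn] X = [forall H in fX X, maxnormal H VV SS] && gen_pos VV (fX X).
  congr (_ && _); last by rewrite (gen_pos_injm injf1 (subsetT _) (fun K _ => subsetT K)).
  apply/forall_inP/forall_inP => maxX H.
    by case/imsetP => K KX ->; rewrite maxnormal_sdpair1 maxX.
  by move=> HX; rewrite -maxnormal_sdpair1 maxX ?imset_f.
apply/eqP; rewrite eqn_leq; apply/andP; split.
  by apply/bigmax_leqP => X predX; rewrite -card_fX leq_bigmax_cond // -predfX.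
apply/bigmax_leqP => Y predY; have /andP[/forall_inP maxY _] := predY.
have defY : fX [set (f1 @*^-1 K)%G | K in Y] = Y.
  rewrite /fX -imset_comp -[RHS]imset_id; apply: eq_in_imset => K /maxY/maxnormal_sub sKV.
  by apply: val_inj; rewrite /= morphpreK.
by rewrite -defY card_fX leq_bigmax_cond // predfX defY.
Qed.

Lemma commg_sdpair (g : gT) (u : rVn) : g \in S ->
  [~ f2 g, f1 u] = f1 (u - u *m rG g)%R.
Proof.
move=> Sg; rewrite commgEr -morphV ?inE // -sdpair_act ?inE //.
by rewrite -morphM ?inE //= mx_repr_actE // mulNmx addrC.
Qed.

Lemma commg_sdpair_eq1 (g : gT) (u : rVn) : g \in S ->
  ([~ f2 g, f1 u] == 1) = (u *m rG g == u)%R.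
Proof.
move=> Sg; rewrite commg_sdpair // morph_injm_eq1 ?inE //.
by rewrite [_ == 1](_ : _ = (u - u *m rG g == 0)%R) // subr_eq0 eq_sym.
Qed.

Let abelVV : p.-abelem VV := morphim_abelem _ (mx_Fp_abelem 1 n p_pr).

Theorem MaxDim_sdprod_repr k (g : 'I_k -> gT) (u : 'I_k -> rVn) (R R' : 'I_k -> {group rVn}) :
    k = i_irr S -> (forall j, g j \in S) -> (forall j, u j \in R j) ->
    (forall j, [acts S, on R j | to]) -> (forall j, [acts S, on R' j | to]) ->
    (forall j, R j :&: R' j = 1) -> (forall i j, i != j -> R i \subset R' j) ->
    (forall i j, i != j -> u j *m rG (g i) = u j)%R -> (forall j, u j *m rG (g j) != u j)%R ->
  MaxDim [set: sdprod_by to] = MaxDim_inv S to [set: rVn] + i_irr S.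
Proof.
move=> ki Sg Ru aR aR' tiRR' sRR' fix_u nfix_u.
rewrite MaxDim_inv_sdpair1 -(i_irr_injm (injm_sdpair2 to) (subxx S)).
apply: (MaxDim_sdprod (sdprod_sdpair to) (abelem_abelian abelVV) (fun K => abelem_splits abelVV)
          (pnat_coprime (abelem_pgroup abelVV) (morphim_pgroup _ p'S))
          (s := fun j => f2 (g j)) (b := fun j => f1 (u j))
          (R := fun j => (f1 @* R j)%G) (R' := fun j => (f1 @* R' j)%G)) => //.
- by move=> j; rewrite mem_morphim.
- by move=> j; rewrite mem_morphim ?inE.
- by move=> j; rewrite morphimS ?subsetT.
- by move=> j; rewrite -acts_sdpair1.
- by move=> j; rewrite morphimS ?subsetT.
- by move=> j; rewrite -acts_sdpair1.
- by move=> j; rewrite -injmI // tiRR' morphim1.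
- by move=> i j /sRR' sRij; rewrite morphimS.
- by move=> i j /fix_u fix_uj; apply/eqP; rewrite commg_sdpair_eq1 ?fix_uj.
- by move=> j; rewrite commg_sdpair_eq1.
by rewrite (i_irr_injm (injm_sdpair2 to) (subxx S)).
Qed.

End ReprSemidirect.

Section RegularCopies.
Variables (gT : finGroupType) (p k : nat).
Local Notation pt := (gT * 'I_k)%type.
Local Notation n := #|{: pt}|.
Local Notation rVn := 'rV['F_p]_n.

Definition rmul_pt (w : pt) (g : gT) : pt := (w.1 * g, w.2).

Lemma rmul_pt1 w : rmul_pt w 1 = w. Proof. by case: w => a j; rewrite /rmul_pt mulg1. Qed.

Lemma rmul_ptM w g h : rmul_pt (rmul_pt w g) h = rmul_pt w (g * h).
Proof. by rewrite /rmul_pt /= mulgA. Qed.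

Definition rmul_mx (g : gT) : 'M['F_p]_n :=
  \matrix_(i, j) (enum_val j == rmul_pt (enum_val i) g)%:R%R.

Lemma rmul_mxE (v : rVn) g j :
  (v *m rmul_mx g)%R 0%R j = v 0%R (enum_rank (rmul_pt (enum_val j) g^-1)).
Proof.
rewrite !mxE (bigD1 (enum_rank (rmul_pt (enum_val j) g^-1))) //= big1 ?addr0.
  by rewrite !mxE enum_rankK rmul_ptM mulVg rmul_pt1 eqxx mulr1.
move=> l nl; rewrite !mxE; case: eqP => [defj | _]; last by rewrite mulr0.
by case/eqP: nl; rewrite defj rmul_ptM mulgV rmul_pt1 enum_valK.
Qed.

Lemma rmul_mx_repr (S : {group gT}) : mx_repr S rmul_mx.
Proof.
split=> [|x y _ _]; apply/matrixP => i j; rewrite ?mxE.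
  by rewrite rmul_pt1 (inj_eq enum_val_inj) eq_sym.
rewrite (bigD1 (enum_rank (rmul_pt (enum_val i) x))) //= big1 ?addr0.
  by rewrite !mxE enum_rankK eqxx mul1r rmul_ptM.
move=> l nl; rewrite !mxE; case: eqP => [defl | _]; last by rewrite mul0r.
by case/eqP: nl; rewrite -defl enum_valK.
Qed.

Definition block (P : pred 'I_k) : {set rVn} :=
  [set v : rVn | [forall i, ~~ P (enum_val i).2 ==> (v 0 i == 0)%R]].

Lemma block_group_set P : group_set (block P).
Proof.
apply/group_setP; split; first by rewrite inE; apply/forall_inP => i _; rewrite mxE.
move=> u v; rewrite !inE => /forall_inP u0 /forall_inP v0.
by apply/forall_inP => i Pi; rewrite [u * v]/= mxE (eqP (u0 i Pi)) (eqP (v0 i Pi)) addr0.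
Qed.

Canonical block_group P := Group (block_group_set P).

Lemma block_rmul P (v : rVn) g : ((v *m rmul_mx g)%R \in block P) = (v \in block P).
Proof.
rewrite !inE; apply/forall_inP/forall_inP => v0 i Pi.
  have := v0 (enum_rank (rmul_pt (enum_val i) g)).
  by rewrite rmul_mxE !enum_rankK rmul_ptM mulgV rmul_pt1 enum_valK; apply.
by rewrite rmul_mxE v0 // enum_rankK.
Qed.

Lemma block_acts (S : {group gT}) P :
  [acts S, on block P | 'MR (MxRepresentation (rmul_mx_repr S))].
Proof.
apply/subsetP => a Sa; rewrite !inE Sa; apply/subsetP => v Bv.
by rewrite inE /= mx_repr_actE // block_rmul.
Qed.

Lemma block_complI j : block (pred1 j) :&: block (predC1 j) = 1.
Proof.
apply/trivgP/subsetP => v; rewrite !inE => /andP[/forall_inP v0 /forall_inP v0'].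
apply/eqP/rowP => i; rewrite mxE; have [ji | nji] := eqVneq (enum_val i).2 j.
  by apply/eqP/v0'; rewrite /= ji negbK.
exact/eqP/v0.
Qed.

Lemma block_sub_compl i j : i != j -> block (pred1 i) \subset block (predC1 j).
Proof.
move=> neij; apply/subsetP => v; rewrite !inE => /forall_inP v0.
by apply/forall_inP => l /negPn /= /eqP lj; apply: v0; rewrite /= lj eq_sym.
Qed.

Definition indicator (H : {set gT}) j : rVn :=
  (\row_i (((enum_val i).1 \in H) && ((enum_val i).2 == j))%:R)%R.

Lemma indicator_block (H : {set gT}) j : indicator H j \in block (pred1 j).
Proof. by rewrite inE; apply/forall_inP => i /= nij; rewrite mxE (negPf nij) andbF. Qed.

Lemma indicator_fix (H : {group gT}) j g :
  g \in H -> (indicator H j *m rmul_mx g)%R = indicator H j.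
Proof. by move=> Hg; apply/rowP => i; rewrite rmul_mxE !mxE enum_rankK /= groupMr ?groupV. Qed.

Lemma indicator_nfix (H : {group gT}) j g :
  g \notin H -> (indicator H j *m rmul_mx g)%R != indicator H j.
Proof.
move=> nHg; apply/negP => /eqP /rowP /(_ (enum_rank ((1 : gT), j))).
rewrite rmul_mxE !mxE !enum_rankK /= mul1g group1 eqxx groupV (negPf nHg).
by move/eqP; rewrite eq_sym oner_eq0.
Qed.

End RegularCopies.

Lemma irredundant_family (gT : finGroupType) (S : {group gT}) :
  exists g : 'I_(i_irr S) -> gT, exists H : 'I_(i_irr S) -> {group gT},
    [/\ forall j, g j \in S, forall i j, i != j -> g i \in H j & forall j, g j \notin H j].
Proof.
pose irrS (A : {set gT}) := (A \subset S) && irredundant A.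
have irrS0 : 0 < #|irrS|.
  apply/card_gt0P; exists set0; rewrite unfold_in /irrS sub0set.
  by apply/forall_inP => h; rewrite inE.
have [A /andP[sAS irrA] eqA] := eq_bigmax_cond (fun A : {set gT} => #|A|) irrS0.
pose g j := enum_val (cast_ord eqA j); have Ag j : g j \in A := enum_valP _.
exists g, (fun j => <<A :\ g j>>%G); split=> [j | i j neij | j].
- exact: subsetP sAS _ (Ag j).
- rewrite mem_gen // in_setD1 Ag andbT; apply: contra neij => /eqP/enum_val_inj.
  by move/cast_ord_inj ->.
apply: contra (forall_inP irrA _ (Ag j)) => gHj; rewrite eqEsubset genS ?subD1set //=.
rewrite gen_subG; apply/subsetP => x Ax; have [-> // | nxg] := eqVneq x (g j).
by rewrite mem_gen // in_setD1 nxg.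
Qed.

Lemma mx_semisimple_Fp (gT : finGroupType) (S : {group gT}) p n
    (rG : mx_representation 'F_p S n) :
  prime p -> p^'.-group S -> inhabited (mxsemisimple rG 1%:M).
Proof.
move=> p_pr p'S; have redG : mx_completely_reducible rG 1%:M.
  by apply: mx_Maschke_pchar; rewrite (eq_pgroup _ (eq_negn (pcharf_eq (pchar_Fp p_pr)))).
by constructor; rewrite -(reducible_Socle1 (DecSocleType rG) redG); apply: Socle_semisimple.
Qed.

(* V ><| S is sdprod_by for the action 'MR rG of S on V = 'rV['F_p]_n, and
   the semisimplicity of V is mxsemisimple rG 1%:M. *)
Theorem proposition4p4 (gT : finGroupType) (S : {group gT}) :
  ~~ flat S ->
  exists (p n : nat) (rG : mx_representation 'F_p S n),
    [/\ prime p,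
        inhabited (mxsemisimple rG 1%:M) &
        MaxDim [set: sdprod_by ('MR rG)%gact]
        = (MaxDim_inv S ('MR rG)%act [set: 'rV['F_p]_n] + i_irr S)%N].
Proof.
move=> _; have [p ltGp p_pr] := prime_above #|gT|.
have p'S : p^'.-group S.
  by rewrite /pgroup p'natE // gtnNdvd ?cardG_gt0 // (leq_ltn_trans (max_card _)).
have [g [H [Sg gH gnH]]] := irredundant_family S.
pose rG := MxRepresentation (rmul_mx_repr p (i_irr S) S).
exists p, _, rG; split=> //; first exact: mx_semisimple_Fp.
apply: (MaxDim_sdprod_repr p_pr p'S (g := g) (u := fun j => indicator p (H j) j)
  (R := fun j => block_group gT p (pred1 j)) (R' := fun j => block_group gT p (predC1 j))) => //.
- by move=> j; apply: indicator_block.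
- by move=> j; apply: block_acts.
- by move=> j; apply: block_acts.
- by move=> j; apply: block_complI.
- by move=> i j; apply: block_sub_compl.
- by move=> i j /gH; apply: indicator_fix.
by move=> j; apply: indicator_nfix.
Qed.
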